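(* Let $r\geq 4$ and $0\leq k\leq 7$. Then the edge set of $Q_{2^r}$ can be partitioned into the edge sets of $2^{r-1}-k$ Hamiltonian cycles (copies of $C_{2^{2^r}}$) of $Q_{2^r}$ and the edge set of a DVOP$[k]$ in $Q_{2^r}$.
   Context: $Q_q$ denotes the $q$-dimensional hypercube graph (vertices are $q$-tuples of $0$'s and $1$'s, adjacent iff they differ in exactly one coordinate). $C_N$ is the cycle on $N$ vertices. $P_k$ is the path with vertices $0,1,\dots,k$ and edges $\hat{j}$ joining $j-1$ and $j$. For a graph $G$, a DVOP$[k]$ is a family $\{p_v\}_{v\in V(G)}$ of embeddings $p_v:P_k\to G$ such that (a) $p_v(\hat{j})=p_{v'}(\hat{j'})$ implies $v=v'$ and $j=j'$, and (b) $p_v(0)=v$ for every $v$; its edge set is the union of the edge images of all $p_v$. *)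

From mathcomp Require Import all_boot.
Set Implicit Arguments. Unset Strict Implicit. Unset Printing Implicit Defensive.

Definition hvert (q : nat) : finType := {ffun 'I_q -> bool}.

Definition hadj (q : nat) (u v : hvert q) : bool :=
  #|[set i : 'I_q | u i != v i]| == 1.

Definition edge_of (q : nat) (u v : hvert q) : {set hvert q} := [set u; v].

Definition hedges (q : nat) : {set {set hvert q}} :=
  [set edge_of e.1 e.2 | e in [set e : hvert q * hvert q | hadj e.1 e.2]].

Definition ham_cycle (q : nat) (c : seq (hvert q)) : Prop :=
  [/\ uniq c, size c = #|hvert q| & cycle (@hadj q) c].

Definition cycle_edges (q : nat) (c : seq (hvert q)) : {set {set hvert q}} :=
  [set edge_of x (next c x) | x in c].

(* p : hvert q -> nat -> hvert q; p v restricted to {0,...,k} is the map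
   P_k -> Q_q.  It is an embedding: injective on {0..k} and sending the edge
   j^ = {j-1, j} (1 <= j <= k) to an edge of Q_q. *)
Definition path_embedding (q k : nat) (f : nat -> hvert q) : Prop :=
  (forall i j, i <= k -> j <= k -> f i = f j -> i = j) /\
  (forall j, 1 <= j <= k -> hadj (f j.-1) (f j)).

Definition pedge (q : nat) (f : nat -> hvert q) (j : nat) : {set hvert q} :=
  edge_of (f j.-1) (f j).

Definition DVOP (q k : nat) (p : hvert q -> nat -> hvert q) : Prop :=
  [/\ forall v, path_embedding k (p v),
      (forall v v' j j', 1 <= j <= k -> 1 <= j' <= k ->
         pedge (p v) j = pedge (p v') j' -> v = v' /\ j = j')
    & forall v, p v 0 = v].

Definition dvop_edges (q k : nat) (p : hvert q -> nat -> hvert q)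
  : {set {set hvert q}} :=
  [set pedge (p e.1) (val e.2) | e in [set e : hvert q * 'I_k.+1 | 0 < val e.2]].

From mathcomp Require Import all_boot zify.
Set Implicit Arguments. Unset Strict Implicit. Unset Printing Implicit Defensive.

(* Q_(2^(n+1)) is the product of two copies of Q_(2^n).  A Hamiltonian cycle
   of Q_(2^n) with N vertices, taken on both factors, spans a torus C_N x C_N
   whose edges split into two Hamiltonian "spiral" cycles; starting from the
   4-cycle Q_2 this gives 2^n Hamiltonian cycles partitioning the edges of
   Q_(2^(n+1)).
   For r = m + 2 there is a potential modulo 8 on the vertices which every step
   along cycle c increases by 1 if c < 2^m and by 5 otherwise.  The path p_v
   starts at v and takes one step along each of k fixed cycles whose
   increments have partial sums distinct modulo 8, so it is injective.  As
   v |-> p_v(j-1) is a bijection, the j-th edges of the paths are exactly the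
   edges of the j-th fixed cycle, and the other 2^(r-1) - k cycles complete
   the partition. *)

Definition hamming (x y : seq bool) : nat := count id [seq p.1 != p.2 | p <- zip x y].
Definition seq_adj (x y : seq bool) : bool := hamming x y == 1.

Lemma hamming_cat x1 x2 y1 y2 : size x1 = size y1 ->
  hamming (x1 ++ x2) (y1 ++ y2) = hamming x1 y1 + hamming x2 y2.
Proof. by move=> h; rewrite /hamming zip_cat // map_cat count_cat. Qed.

Lemma hammingxx x : hamming x x = 0.
Proof. by elim: x => //= b x; rewrite /hamming /= eqxx. Qed.

Lemma hamming_eq0 x y : size x = size y -> hamming x y = 0 -> x = y.
Proof.
elim: x y => [|a x IH] [|b y] //= [] hs.
by rewrite /hamming /=; case: eqP => [->|] //= /(IH y hs) ->.
Qed.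

Lemma seq_adj_neq x y : seq_adj x y -> x <> y.
Proof. by move=> h e; move: h; rewrite e /seq_adj hammingxx. Qed.

Lemma cat_inj_size (T : eqType) (a b a' b' : seq T) :
  size a = size a' -> a ++ b = a' ++ b' -> a = a' /\ b = b'.
Proof. by move=> hs /eqP; rewrite eqseq_cat // => /andP [/eqP -> /eqP ->]. Qed.

Lemma modnB_congr a b a' b' N : b <= a -> b' <= a' ->
  a = a' %[mod N] -> b = b' %[mod N] -> a - b = a' - b' %[mod N].
Proof.
move=> h1 h2 ea eb; apply/eqP; rewrite -(eqn_modDr b).
by rewrite subnK // ea -(modnDmr (a' - b')) eb modnDmr subnK.
Qed.

Lemma modnS_mod a N : a.+1 = (a %% N).+1 %[mod N].
Proof. by rewrite -[a.+1]addn1 -[(a %% N).+1]addn1 modnDml. Qed.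

Lemma eqmodS a b N : a = b %[mod N] -> a.+1 = b.+1 %[mod N].
Proof. by move=> e; rewrite modnS_mod e -modnS_mod. Qed.

Lemma dvdn_eqmod a b N : a = b %[mod N] -> (N %| a) = (N %| b).
Proof. by move=> e; rewrite /dvdn e. Qed.

Lemma modn_sq_digits N u : 0 < N -> u %% (N * N) = (u %/ N %% N) * N + u %% N.
Proof.
move=> N0; rewrite {1}(divn_eq (u %% (N * N)) N) -modn_divl modn_dvdm //.
exact: dvdn_mull.
Qed.

(* The s-th vertex of the Hamiltonian cycle of C_N x C_N that moves along the
   first factor, except every N-th step which moves along the second.  Together
   with its mirror image it partitions the edges of the torus. *)
Definition spiral_x N s := (s - s %/ N) %% N.
Definition spiral_y N s := (s %/ N) %% N.

Lemma spiral_x_mod N s : 0 < N -> spiral_x N (s %% (N * N)) = spiral_x N s.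
Proof.
move=> N0; rewrite /spiral_x; apply: modnB_congr; try exact: leq_div.
  by rewrite modn_dvdm // dvdn_mull.
by rewrite !modn_divl modn_mod.
Qed.

Lemma spiral_y_mod N s : spiral_y N (s %% (N * N)) = spiral_y N s.
Proof. by rewrite /spiral_y !modn_divl modn_mod. Qed.

Lemma spiral_surj N x y : 0 < N ->
  exists s, spiral_x N s = x %[mod N] /\ spiral_y N s = y %[mod N].
Proof.
move=> N0; set y' := y %% N.
exists (y' * N + (x + y) %% N).
have hd : (y' * N + (x + y) %% N) %/ N = y'.
  by rewrite divnMDl // divn_small ?ltn_pmod // addn0.
rewrite /spiral_x /spiral_y hd !modn_mod; split; last by [].
apply/eqP; rewrite -(eqn_modDr y') subnK; last first.
  by apply: leq_trans (leq_addr _ _); rewrite leq_pmulr.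
by rewrite modnMDl modn_mod modnDmr.
Qed.

(* [hcycle n i s] is the s-th vertex, a word of length 2^(n+1), of the i-th of
   the 2^n Hamiltonian cycles decomposing Q_(2^(n+1)).  Cycle t on both halves
   of a word spans a torus C_N x C_N, and cycles 2t and 2t+1 of the next level
   are its two spiral cycles, with the roles of the halves exchanged. *)
Definition q2_cycle (s : nat) : seq bool :=
  match s with 0 => [:: false; false] | 1 => [:: true; false]
  | 2 => [:: true; true] | _ => [:: false; true] end.

Definition cyc_len n := 2 ^ (2 ^ n.+1).

Fixpoint hcycle n (i s : nat) : seq bool :=
  match n with
  | 0 => q2_cycle (s %% 4)
  | n'.+1 => let N := cyc_len n' in let t := i./2 in
      if odd i then hcycle n' t (spiral_y N s) ++ hcycle n' t (spiral_x N s)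
      else hcycle n' t (spiral_x N s) ++ hcycle n' t (spiral_y N s)
  end.

Lemma cyc_len_gt3 n : 3 < cyc_len n.
Proof.
rewrite /cyc_len; have h : 2 <= 2 ^ n.+1.
  have : 0 < 2 ^ n by rewrite expn_gt0.
  rewrite expnS; lia.
exact: leq_trans (leq_pexp2l _ h).
Qed.

Lemma cyc_len_gt0 n : 0 < cyc_len n.
Proof. by have := cyc_len_gt3 n; lia. Qed.

Lemma cyc_lenS n : cyc_len n.+1 = cyc_len n * cyc_len n.
Proof. by rewrite /cyc_len (expnS 2 n.+1) mulnC expnM expnS expn1. Qed.

Lemma size_hcycle n i s : size (hcycle n i s) = 2 ^ n.+1.
Proof.
elim: n i s => [|n IH] i s /=; first by case: (s %% 4) => [|[|[|]]].
by case: ifP => _; rewrite size_cat !IH (expnS 2 n.+1); lia.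
Qed.

Lemma hcycle_mod n i s : hcycle n i (s %% cyc_len n) = hcycle n i s.
Proof.
elim: n i s => [|n IH] i s /=; first by rewrite /cyc_len modn_dvdm.
by rewrite cyc_lenS spiral_x_mod ?cyc_len_gt0 // spiral_y_mod.
Qed.

Lemma hcycle_eqmod n i u v : u = v %[mod cyc_len n] -> hcycle n i u = hcycle n i v.
Proof. by move=> e; rewrite -hcycle_mod e hcycle_mod. Qed.

Lemma eq_cat_hcycle n t t' a a' (b b' : seq bool) :
  hcycle n t a ++ b = hcycle n t' a' ++ b' -> hcycle n t a = hcycle n t' a' /\ b = b'.
Proof. by apply: cat_inj_size; rewrite !size_hcycle. Qed.

Lemma hcycle_inj n i u v : hcycle n i u = hcycle n i v -> u = v %[mod cyc_len n].
Proof.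
elim: n i u v => [|n IH] i u v /=.
  change (cyc_len 0) with 4.
  move: (ltn_pmod u (isT : 0 < 4)) (ltn_pmod v (isT : 0 < 4)).
  by case: (u %% 4) => [|[|[|[|?]]]]; case: (v %% 4) => [|[|[|[|?]]]].
rewrite cyc_lenS; set N := cyc_len n; have N0 : 0 < N by exact: cyc_len_gt0.
move=> e.
have [ex ey] : spiral_x N u = spiral_x N v %[mod N] /\ spiral_y N u = spiral_y N v %[mod N].
  by case: (odd i) e => /eq_cat_hcycle [/IH h1 /IH h2].
move: ex ey; rewrite /spiral_x /spiral_y !modn_mod => ex ey.
have huv : u = v %[mod N].
  rewrite -(subnK (leq_div u N)) -(subnK (leq_div v N)).
  by rewrite -modnDm ex ey modnDm.
by rewrite !modn_sq_digits // ey huv.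
Qed.

Definition hcycle_halves n i s L R :=
  [/\ hcycle n.+1 i s = hcycle n i./2 L ++ hcycle n i./2 R,
      L + R = s %[mod cyc_len n] &
      hcycle n.+1 i s.+1 = if (cyc_len n %| (L + R).+1) == odd i
                           then hcycle n i./2 L.+1 ++ hcycle n i./2 R
                           else hcycle n i./2 L ++ hcycle n i./2 R.+1].

Lemma hcycle_halves_spiral n i s :
  hcycle_halves n i s (if odd i then spiral_y (cyc_len n) s else spiral_x (cyc_len n) s)
                      (if odd i then spiral_x (cyc_len n) s else spiral_y (cyc_len n) s).
Proof.
set N := cyc_len n; have N0 : 0 < N by exact: cyc_len_gt0.
have exy : spiral_x N s + spiral_y N s = s %[mod N].
  by rewrite /spiral_x /spiral_y modnDm subnK // leq_div.
have dxy : (N %| (spiral_x N s + spiral_y N s).+1) = (N %| s.+1).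
  exact/dvdn_eqmod/eqmodS.
have dyx : (N %| (spiral_y N s + spiral_x N s).+1) = (N %| s.+1) by rewrite addnC.
case hd: (N %| s.+1).
  have d : s.+1 %/ N = (s %/ N).+1 by rewrite divnS // hd.
  have hy : hcycle n i./2 (spiral_y N s.+1) = hcycle n i./2 (spiral_y N s).+1.
    by apply: hcycle_eqmod; rewrite /spiral_y d modn_mod -modnS_mod.
  have hx : spiral_x N s.+1 = spiral_x N s by rewrite /spiral_x d subSS.
  split; first by rewrite /=; case: (odd i).
    by case: (odd i) => //; rewrite addnC.
  by rewrite /=; case: (odd i); rewrite ?dyx ?dxy hd /= ?hy ?hx.
have d : s.+1 %/ N = s %/ N by rewrite divnS // hd.
have hy : spiral_y N s.+1 = spiral_y N s by rewrite /spiral_y d.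
have hx : hcycle n i./2 (spiral_x N s.+1) = hcycle n i./2 (spiral_x N s).+1.
  by apply: hcycle_eqmod; rewrite /spiral_x d subSn ?leq_div // modn_mod -modnS_mod.
split; first by rewrite /=; case: (odd i).
  by case: (odd i) => //; rewrite addnC.
by rewrite /=; case: (odd i); rewrite ?dyx ?dxy hd /= ?hy ?hx.
Qed.

Lemma hcycle_halves_exists n i s : exists L R, hcycle_halves n i s L R.
Proof. by do 2 eexists; exact: hcycle_halves_spiral. Qed.

Lemma hcycle_halves_mod n i s L R L' R' : hcycle_halves n i s L R ->
  L = L' %[mod cyc_len n] -> R = R' %[mod cyc_len n] -> hcycle_halves n i s L' R'.
Proof.
move=> [h1 h2 h3] eL eR.
have eS : L + R = L' + R' %[mod cyc_len n] by rewrite -modnDm eL eR modnDm.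
split.
- by rewrite h1 (hcycle_eqmod _ eL) (hcycle_eqmod _ eR).
- by rewrite -eS.
- rewrite h3 (dvdn_eqmod (eqmodS eS)) (hcycle_eqmod _ eL) (hcycle_eqmod _ eR).
  by rewrite (hcycle_eqmod _ (eqmodS eL)) (hcycle_eqmod _ (eqmodS eR)).
Qed.

Lemma hcycle_halves_surj n i L R : exists s, hcycle_halves n i s L R.
Proof.
have N0 := cyc_len_gt0 n.
case hi: (odd i).
  have [s [h1 h2]] := spiral_surj R L N0; exists s.
  by apply: hcycle_halves_mod (hcycle_halves_spiral n i s) _ _; rewrite hi.
have [s [h1 h2]] := spiral_surj L R N0; exists s.
by apply: hcycle_halves_mod (hcycle_halves_spiral n i s) _ _; rewrite hi.
Qed.

Lemma hcycle_adj n i s : seq_adj (hcycle n i s) (hcycle n i s.+1).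
Proof.
elim: n i s => [|n IH] i s.
  rewrite /= (modnS_mod s 4); move: (ltn_pmod s (isT : 0 < 4)).
  by case: (s %% 4) => [|[|[|[|?]]]].
have [L [R [h1 _ h3]]] := hcycle_halves_exists n i s.
rewrite h1 h3; case: ifP => _; rewrite /seq_adj hamming_cat ?size_hcycle //.
  by rewrite (hammingxx (hcycle n _ R)); move/eqP: (IH i./2 L) ->.
by rewrite (hammingxx (hcycle n _ L)); move/eqP: (IH i./2 R) ->.
Qed.

Lemma hcycle_neq_succ n i s : hcycle n i s <> hcycle n i s.+1.
Proof. exact: seq_adj_neq (hcycle_adj n i s). Qed.

(* Uses that cycles have length at least 4. *)
Lemma hcycle_no_backstep n t u v :
  hcycle n t u = hcycle n t v.+1 -> hcycle n t u.+1 = hcycle n t v -> False.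
Proof.
move=> /hcycle_inj e1 /hcycle_inj e2.
have : v + 2 = v + 0 %[mod cyc_len n] by rewrite addn0 addn2 -e2; exact: eqmodS.
move/eqP; rewrite eqn_modDl mod0n modn_small ?cyc_len_gt3 //.
exact: leq_trans (cyc_len_gt3 n).
Qed.

Lemma seq_halves (T : Type) (x : seq T) h : size x = h + h ->
  exists x1 x2, [/\ x = x1 ++ x2, size x1 = h & size x2 = h].
Proof.
move=> hx; exists (take h x), (drop h x).
by rewrite cat_take_drop size_drop size_takel hx ?addnK ?leq_addr.
Qed.

Lemma hcycle_surj n i x : size x = 2 ^ n.+1 -> exists s, x = hcycle n i s.
Proof.
elim: n i x => [|n IH] i x hx.
  case: x hx => [|a [|b [|]]] // _.
  by case: a; case: b; [exists 2 | exists 1 | exists 3 | exists 0].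
rewrite expnS mul2n -addnn in hx; have [x1 [x2 [-> hx1 hx2]]] := seq_halves hx.
have [L ->] := IH i./2 _ hx1; have [R ->] := IH i./2 _ hx2.
by have [s [h1 _ _]] := hcycle_halves_surj n i L R; exists s.
Qed.

Definition same_edge (x y x' y' : seq bool) := (x = x' /\ y = y') \/ (x = y' /\ y = x').

Lemma half_ltE m i : (i./2 < 2 ^ m) = (i < 2 ^ m.+1).
Proof.
rewrite expnS; have e := odd_double_half i; rewrite -muln2 in e.
have : odd i <= 1 by case: (odd i).
move=> h; apply/idP/idP; lia.
Qed.

Lemma half_odd_inj i i' : i./2 = i'./2 -> odd i = odd i' -> i = i'.
Proof. by move=> h1 h2; rewrite -(odd_double_half i) -(odd_double_half i') h1 h2. Qed.

Lemma hcycle_halves_edge_inj n i i' s s' L R L' R' :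
  (forall j j' u u', j < 2 ^ n -> j' < 2 ^ n ->
     same_edge (hcycle n j u) (hcycle n j u.+1) (hcycle n j' u') (hcycle n j' u'.+1) ->
     j = j') ->
  i < 2 ^ n.+1 -> i' < 2 ^ n.+1 -> hcycle_halves n i s L R -> hcycle_halves n i' s' L' R' ->
  same_edge (hcycle n.+1 i s) (hcycle n.+1 i s.+1) (hcycle n.+1 i' s') (hcycle n.+1 i' s'.+1) ->
  i = i'.
Proof.
move=> IH; rewrite -!half_ltE => hi hi' [h1 _ h3] [h1' _ h3'].
rewrite h1 h3 h1' h3'; move: hi hi'; set t := i./2; set t' := i'./2 => hi hi'.
have sumLR : hcycle n t L = hcycle n t L' -> hcycle n t R = hcycle n t R' ->
    (cyc_len n %| (L + R).+1) = (cyc_len n %| (L' + R').+1).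
  by move=> /hcycle_inj eL /hcycle_inj eR; apply/dvdn_eqmod/eqmodS; rewrite -modnDm eL eR modnDm.
case c: (_ == odd i); case c': (_ == odd i');
  case=> -[/eq_cat_hcycle [E1a E1b] /eq_cat_hcycle [E2a E2b]].
- have tt : t = t' by apply: (IH _ _ L L') => //; left.
  rewrite -tt in E1a E1b c'; apply: half_odd_inj => //.
  by move/eqP: c <-; move/eqP: c' <-; rewrite (sumLR E1a E1b).
- have tt : t = t' by apply: (IH _ _ L L') => //; right.
  by rewrite -tt in E1a E2a; case: (hcycle_no_backstep E1a E2a).
- (* one edge moves the left half and the other the right half *)
  by case: (@hcycle_neq_succ n t L); rewrite E1a E2a.
- by case: (@hcycle_neq_succ n t L); rewrite E1a E2a.
- by case: (@hcycle_neq_succ n t' L'); rewrite -E1a -E2a.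
- by case: (@hcycle_neq_succ n t' L'); rewrite -E1a -E2a.
- have tt : t = t' by apply: (IH _ _ R R') => //; left.
  rewrite -tt in E1a E1b c'; apply: half_odd_inj => //.
  by move: c c'; rewrite (sumLR E1a E1b); case: (_ %| _); case: (odd i); case: (odd i').
- have tt : t = t' by apply: (IH _ _ R R') => //; right.
  by rewrite -tt in E1b E2b; case: (hcycle_no_backstep E1b E2b).
Qed.

Lemma hcycle_edge_inj n i i' s s' : i < 2 ^ n -> i' < 2 ^ n ->
  same_edge (hcycle n i s) (hcycle n i s.+1) (hcycle n i' s') (hcycle n i' s'.+1) -> i = i'.
Proof.
elim: n i i' s s' => [|n IH] i i' s s'; first by rewrite expn0; lia.
move=> hi hi'.
exact: hcycle_halves_edge_inj IH hi hi' (hcycle_halves_spiral n i s)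
  (hcycle_halves_spiral n i' s').
Qed.

Definition hcycle_edge n (x y : seq bool) :=
  exists i s, i < 2 ^ n /\ same_edge x y (hcycle n i s) (hcycle n i s.+1).

Lemma bit_double_lt (b : bool) t n : t < 2 ^ n -> b + t.*2 < 2 ^ n.+1.
Proof. by rewrite -half_ltE half_bit_double. Qed.

Lemma hcycle_edge_catl n x y z : size z = 2 ^ n.+1 ->
  hcycle_edge n x y -> hcycle_edge n.+1 (z ++ x) (z ++ y).
Proof.
move=> hz [t [R [ht E]]]; have [L hL] := hcycle_surj t hz.
set b := ~~ (cyc_len n %| (L + R).+1).
have [s [h1 _ h3]] := hcycle_halves_surj n (b + t.*2) L R.
exists (b + t.*2), s; split; first exact: bit_double_lt.
rewrite h1 h3 half_bit_double oddD odd_double addbF oddb /b -hL.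
by case: (_ %| _) => /=; case: E => -[-> ->]; [left|right|left|right].
Qed.

Lemma hcycle_edge_catr n x y z : size z = 2 ^ n.+1 ->
  hcycle_edge n x y -> hcycle_edge n.+1 (x ++ z) (y ++ z).
Proof.
move=> hz [t [L [ht E]]]; have [R hR] := hcycle_surj t hz.
set b := cyc_len n %| (L + R).+1.
have [s [h1 _ h3]] := hcycle_halves_surj n (b + t.*2) L R.
exists (b + t.*2), s; split; first exact: bit_double_lt.
rewrite h1 h3 half_bit_double oddD odd_double addbF oddb /b eqxx -hR.
by case: E => -[-> ->]; [left|right].
Qed.

Lemma hcycle_cover0 x y : size x = 2 -> size y = 2 -> seq_adj x y -> hcycle_edge 0 x y.
Proof.
case: x => [|a [|b [|]]] // _; case: y => [|c [|d [|]]] // _.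
case: a; case: b; case: c; case: d; rewrite /seq_adj /hamming //= => _; exists 0.
- by exists 1; split; last right.
- by exists 2; split; last left.
- by exists 1; split; last left.
- by exists 0; split; last right.
- by exists 2; split; last right.
- by exists 3; split; last left.
- by exists 0; split; last left.
- by exists 3; split; last right.
Qed.

Lemma hcycle_cover n x y : size x = 2 ^ n.+1 -> size y = 2 ^ n.+1 ->
  seq_adj x y -> hcycle_edge n x y.
Proof.
elim: n x y => [|n IH] x y hx hy; first exact: hcycle_cover0.
rewrite expnS mul2n -addnn in hx hy.
have [x1 [x2 [-> hx1 hx2]]] := seq_halves hx; have [y1 [y2 [-> hy1 hy2]]] := seq_halves hy.
rewrite /seq_adj hamming_cat ?hx1 ?hy1 //.
case E1: (hamming x1 y1) => [|[|k]] //= E2.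
  rewrite (hamming_eq0 _ E1) ?hx1 ?hy1 //.
  by apply: hcycle_edge_catl => //; apply: IH.
have E2' : hamming x2 y2 = 0 by move/eqP: E2; lia.
rewrite (hamming_eq0 _ E2') ?hx2 ?hy2 //.
by apply: hcycle_edge_catr => //; apply: IH => //; rewrite /seq_adj E1.
Qed.

(* A potential mod 8 on the words of length 2^(m+2): on Q_4 it is the position
   along cycle 0, and it is additive over halves.  Cycle i of Q_4 moves it by
   [pot_inc 0 i], which is checked by computation. *)
Fixpoint potential m (x : seq bool) : nat :=
  match m with
  | 0 => index x [seq hcycle 1 0 s | s <- iota 0 (cyc_len 1)] %% 8
  | m'.+1 => potential m' (take (2 ^ m.+1) x) + potential m' (drop (2 ^ m.+1) x)
  end.

Definition pot_inc m i := if i < 2 ^ m then 1 else 5.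

Lemma potential_cat m x y : size x = 2 ^ m.+2 ->
  potential m.+1 (x ++ y) = potential m x + potential m y.
Proof. by move=> hx; rewrite /= -hx take_size_cat // drop_size_cat. Qed.

Lemma potential_succ0 i s : i < 2 ->
  potential 0 (hcycle 1 i s.+1) = potential 0 (hcycle 1 i s) + pot_inc 0 i %[mod 8].
Proof.
have base : all (fun s => all (fun i => potential 0 (hcycle 1 i s.+1) %% 8 ==
   (potential 0 (hcycle 1 i s) + pot_inc 0 i) %% 8) (iota 0 2)) (iota 0 (cyc_len 1)).
  by vm_compute.
have -> : hcycle 1 i s.+1 = hcycle 1 i (s %% cyc_len 1).+1 by exact/hcycle_eqmod/modnS_mod.
rewrite -(hcycle_mod 1 i s) => hi; apply/eqP.
have /allP/(_ (s %% cyc_len 1)) := base.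
rewrite mem_iota ltn_pmod ?cyc_len_gt0 // => /(_ isT)/allP/(_ i).
by rewrite mem_iota => /(_ hi).
Qed.

Lemma potential_succ m i s : i < 2 ^ m.+1 ->
  potential m (hcycle m.+1 i s.+1) = potential m (hcycle m.+1 i s) + pot_inc m i %[mod 8].
Proof.
elim: m i s => [|m IH] i s hi; first exact: potential_succ0.
have ht : i./2 < 2 ^ m.+1 by rewrite half_ltE.
have -> : pot_inc m.+1 i = pot_inc m i./2 by rewrite /pot_inc half_ltE.
have [L [R [h1 _ h3]]] := hcycle_halves_exists m.+1 i s.
rewrite h1 h3; case: ifP => _; rewrite !potential_cat ?size_hcycle //.
  by rewrite -addnA [potential _ _ + pot_inc _ _]addnC addnA -modnDml IH // modnDml.
by rewrite -addnA -modnDmr IH // modnDmr.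
Qed.

Lemma card_ord_count q (P : pred nat) : #|[set i : 'I_q | P i]| = count P (iota 0 q).
Proof.
by rewrite cardsE -sum1_card -(big_mkord P (fun _ => 1)) sum1_count /index_iota subn0.
Qed.

Definition vert_of_seq q (x : seq bool) : hvert q := [ffun i : 'I_q => nth false x i].
Definition seq_of_vert q (v : hvert q) : seq bool := [seq v i | i <- enum 'I_q].

Lemma size_seq_of_vert q (v : hvert q) : size (seq_of_vert v) = q.
Proof. by rewrite size_map size_enum_ord. Qed.

Lemma seq_of_vertK q (v : hvert q) : vert_of_seq q (seq_of_vert v) = v.
Proof.
apply/ffunP => i; rewrite ffunE (nth_map i) ?size_enum_ord //.
by rewrite nth_ord_enum.
Qed.

Lemma vert_of_seqK q x : size x = q -> seq_of_vert (vert_of_seq q x) = x.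
Proof.
move=> hx; apply: (@eq_from_nth _ false); first by rewrite size_seq_of_vert.
move=> i; rewrite size_seq_of_vert => hi.
by rewrite (nth_map (Ordinal hi)) ?size_enum_ord // ffunE nth_enum_ord.
Qed.

Lemma vert_of_seq_inj q x y : size x = q -> size y = q ->
  vert_of_seq q x = vert_of_seq q y -> x = y.
Proof. by move=> hx hy e; rewrite -(vert_of_seqK hx) -(vert_of_seqK hy) e. Qed.

Lemma hamming_nth q x y : size x = q -> size y = q ->
  hamming x y = count (fun i => nth false x i != nth false y i) (iota 0 q).
Proof.
move=> hx hy; rewrite /hamming.
suff -> : [seq p.1 != p.2 | p <- zip x y] =
          [seq nth false x i != nth false y i | i <- iota 0 q] by rewrite count_map.
apply: (@eq_from_nth _ false).
  by rewrite !size_map size_zip size_iota hx hy minnn.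
move=> i; rewrite !size_map size_zip hx hy minnn => hi.
rewrite (nth_map (false, false)) ?size_zip ?hx ?hy ?minnn //.
by rewrite (nth_map 0) ?size_iota // nth_zip ?hx ?hy // nth_iota.
Qed.

Lemma hadj_vert_of_seq q x y : size x = q -> size y = q ->
  hadj (vert_of_seq q x) (vert_of_seq q y) = seq_adj x y.
Proof.
move=> hx hy; rewrite /hadj /seq_adj (hamming_nth hx hy) -card_ord_count.
by congr (_ == 1); apply: eq_card => i; rewrite !inE !ffunE.
Qed.

Lemma hadj_seq_of_vert q (u w : hvert q) : hadj u w = seq_adj (seq_of_vert u) (seq_of_vert w).
Proof. by rewrite -(@hadj_vert_of_seq q) ?size_seq_of_vert // !seq_of_vertK. Qed.

Lemma set2_inj (T : finType) (u v u' v' : T) : u != v -> [set u; v] = [set u'; v'] ->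
  (u = u' /\ v = v') \/ (u = v' /\ v = u').
Proof.
move=> nuv e.
have : u \in [set u'; v'] by rewrite -e set21.
have : v \in [set u'; v'] by rewrite -e set22.
have : u' \in [set u; v] by rewrite e set21.
rewrite !inE => /orP [] /eqP eu /orP [] /eqP ev /orP [] /eqP ew //;
  by [left | right | move: nuv; rewrite eu ev eqxx | move: nuv; rewrite ew ev eqxx].
Qed.

Definition hvertex m c s : hvert (2 ^ m.+2) := vert_of_seq (2 ^ m.+2) (hcycle m.+1 c s).
Definition hedge m c s : {set hvert (2 ^ m.+2)} := edge_of (hvertex m c s) (hvertex m c s.+1).
Definition ham m c : seq (hvert (2 ^ m.+2)) := [seq hvertex m c s | s <- iota 0 (cyc_len m.+1)].

Lemma hvertex_eqmod m c u v : u = v %[mod cyc_len m.+1] -> hvertex m c u = hvertex m c v.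
Proof. by move=> e; rewrite /hvertex (hcycle_eqmod _ e). Qed.

Lemma hvertex_period m c : hvertex m c (cyc_len m.+1) = hvertex m c 0.
Proof. by apply: hvertex_eqmod; rewrite modnn mod0n. Qed.

Lemma hvertex_inj m c u v :
  u < cyc_len m.+1 -> v < cyc_len m.+1 -> hvertex m c u = hvertex m c v -> u = v.
Proof.
move=> hu hv /vert_of_seq_inj e; have := hcycle_inj (e (size_hcycle _ _ _) (size_hcycle _ _ _)).
by rewrite !modn_small.
Qed.

Lemma hvertex_adj m c s : hadj (hvertex m c s) (hvertex m c s.+1).
Proof. by rewrite /hvertex hadj_vert_of_seq ?size_hcycle // hcycle_adj. Qed.

Lemma hvertex_neq_succ m c s : hvertex m c s != hvertex m c s.+1.
Proof.
by apply/eqP => /vert_of_seq_inj-/(_ (size_hcycle _ _ _) (size_hcycle _ _ _)) /hcycle_neq_succ.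
Qed.

Lemma path_map_iota (T : Type) (e : rel T) (f : nat -> T) a k :
  (forall s, e (f s) (f s.+1)) -> path e (f a) [seq f s | s <- iota a.+1 k].
Proof. by move=> h; elim: k a => [|k IH] a //=; rewrite h IH. Qed.

Lemma ham_uniq m c : uniq (ham m c).
Proof.
rewrite map_inj_in_uniq ?iota_uniq // => u v; rewrite !mem_iota !add0n.
exact: hvertex_inj.
Qed.

Lemma ham_cycle_ham m c : ham_cycle (ham m c).
Proof.
split; first exact: ham_uniq.
  by rewrite size_map size_iota card_ffun card_bool card_ord.
have := hvertex_period m c; rewrite /ham.
case: (cyc_len m.+1) (cyc_len_gt0 m.+1) => [|N] //= _ eN.
rewrite -[X in rcons _ X]eN -map_rcons -cats1.
have -> : iota 1 N ++ [:: N.+1] = iota 1 (N + 1) by rewrite (iotaD 1 N 1) add1n.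
exact/path_map_iota/hvertex_adj.
Qed.

Lemma next_ham m c s : s < cyc_len m.+1 -> next (ham m c) (hvertex m c s) = hvertex m c s.+1.
Proof.
move=> hs.
have hx : hvertex m c s = nth (hvertex m c 0) (ham m c) s.
  by rewrite /ham (nth_map 0) ?size_iota // nth_iota.
rewrite next_nth {1}hx mem_nth ?size_map ?size_iota //.
rewrite hx index_uniq ?size_map ?size_iota ?ham_uniq //.
move: hs (hvertex_period m c); rewrite /ham; case: (cyc_len m.+1) => [|N] // hs eN /=.
case: (ltnP s N) => h; first by rewrite (nth_map 0) ?size_iota // nth_iota.
have -> : s = N by lia.
by rewrite nth_default ?size_map ?size_iota // eN.
Qed.

Lemma mem_ham_edges m c E : E \in cycle_edges (ham m c) <-> exists s, E = hedge m c s.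
Proof.
split.
  case/imsetP => x /mapP [s hs ->] ->; exists s.
  by rewrite /hedge next_ham //; move: hs; rewrite mem_iota.
move=> [s ->]; set s' := s %% cyc_len m.+1.
have -> : hedge m c s = hedge m c s'.
  by congr edge_of; apply: hvertex_eqmod; rewrite ?modn_mod // -modnS_mod.
have hs : s' < cyc_len m.+1 by rewrite ltn_pmod ?cyc_len_gt0.
by rewrite /hedge -next_ham //; apply/imsetP; exists (hvertex m c s'); rewrite // map_f ?mem_iota.
Qed.

Lemma hedge_same_edge m c s c' s' : hedge m c s = hedge m c' s' ->
  same_edge (hcycle m.+1 c s) (hcycle m.+1 c s.+1) (hcycle m.+1 c' s') (hcycle m.+1 c' s'.+1).
Proof.
move=> /(set2_inj (hvertex_neq_succ m c s)).
have I a b a' b' := @vert_of_seq_inj (2 ^ m.+2) _ _ (size_hcycle m.+1 a b) (size_hcycle m.+1 a' b').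
by case=> -[/I h1 /I h2]; [left | right].
Qed.

Lemma hedge_inj_cycle m c s c' s' : c < 2 ^ m.+1 -> c' < 2 ^ m.+1 ->
  hedge m c s = hedge m c' s' -> c = c'.
Proof. by move=> hc hc' /hedge_same_edge; apply: hcycle_edge_inj. Qed.

Lemma hedge_inj_pos m c s s' : hedge m c s = hedge m c s' -> hcycle m.+1 c s = hcycle m.+1 c s'.
Proof. by move=> /hedge_same_edge [[]|[h1 h2]] //; case: (hcycle_no_backstep h1 h2). Qed.

Lemma ham_edges_disjoint m c c' : c < 2 ^ m.+1 -> c' < 2 ^ m.+1 -> c != c' ->
  [disjoint cycle_edges (ham m c) & cycle_edges (ham m c')].
Proof.
move=> hc hc' ncc'; apply/pred0P => E /=.
apply/negP => /andP [/mem_ham_edges [s ->] /mem_ham_edges [s' /(hedge_inj_cycle hc hc') ecc']].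
by rewrite ecc' eqxx in ncc'.
Qed.

Lemma hedges_ham m : hedges (2 ^ m.+2) = \bigcup_(c < 2 ^ m.+1) cycle_edges (ham m c).
Proof.
apply/setP => E; apply/imsetP/bigcupP.
  case=> -[u w]; rewrite inE /= hadj_seq_of_vert => huw ->.
  have [c [s [hc hse]]] := hcycle_cover (size_seq_of_vert u) (size_seq_of_vert w) huw.
  exists (Ordinal hc) => //; apply/mem_ham_edges; exists s.
  rewrite -(seq_of_vertK u) -(seq_of_vertK w) /hedge /hvertex /edge_of.
  by case: hse => -[-> ->] //; rewrite setUC.
case=> c _ /mem_ham_edges [s ->].
by exists (hvertex m c s, hvertex m c s.+1); rewrite // inE hvertex_adj.
Qed.

(* The increments [pot_inc] along these seven cycles are 1,1,5,5,1,1,5, whose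
   partial sums 0,1,2,7,12,13,14,19 are distinct mod 8. *)
Definition path_cycles m := [:: 0; 1; 2 ^ m; (2 ^ m).+1; 2; 3; (2 ^ m).+2].
Definition path_incs := [:: 1; 1; 5; 5; 1; 1; 5].
Definition inc_sum j := sumn (take j path_incs).

Lemma exp2_ge4 m : 2 <= m -> 4 <= 2 ^ m.
Proof. by move=> h; rewrite (_ : 4 = 2 ^ 2) // leq_exp2l. Qed.

Lemma pot_inc_path_cycles m l : 2 <= m -> l < 7 ->
  pot_inc m (nth 0 (path_cycles m) l) = nth 0 path_incs l.
Proof.
move=> /exp2_ge4.
by rewrite /pot_inc; case: l => [|[|[|[|[|[|[|l]]]]]]] //= h4 _; case: ifP; lia.
Qed.

Lemma path_cycles_lt m l : 2 <= m -> l < 7 -> nth 0 (path_cycles m) l < 2 ^ m.+1.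
Proof.
move=> /exp2_ge4.
by rewrite expnS; case: l => [|[|[|[|[|[|[|l]]]]]]] //= h4 _; lia.
Qed.

Lemma uniq_path_cycles m : 2 <= m -> uniq (path_cycles m).
Proof.
move=> /exp2_ge4.
rewrite /path_cycles; move: (2 ^ m) => a ha; rewrite /= !inE !negb_or.
by repeat (apply/andP; split); apply/eqP; lia.
Qed.

Lemma inc_sumS j : j < 7 -> inc_sum j.+1 = inc_sum j + nth 0 path_incs j.
Proof. by case: j => [|[|[|[|[|[|[|j]]]]]]]. Qed.

Lemma inc_sum_inj i j : i <= 7 -> j <= 7 -> inc_sum i = inc_sum j %[mod 8] -> i = j.
Proof.
have : all (fun i => all (fun j => (inc_sum i == inc_sum j %[mod 8]) ==> (i == j))
  (iota 0 8)) (iota 0 8) by [].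
move=> /allP/(_ i) + hi hj e; rewrite mem_iota => /(_ hi)/allP/(_ j).
by rewrite mem_iota => /(_ hj)/implyP/(_ (introT eqP e))/eqP.
Qed.

Definition hcycle_pos m c x := index x [seq hcycle m.+1 c s | s <- iota 0 (cyc_len m.+1)].

Lemma hcycle_posP m c x : size x = 2 ^ m.+2 ->
  hcycle_pos m c x < cyc_len m.+1 /\ hcycle m.+1 c (hcycle_pos m c x) = x.
Proof.
move=> hx; have [s ->] := hcycle_surj c hx.
have hin : hcycle m.+1 c s \in [seq hcycle m.+1 c s | s <- iota 0 (cyc_len m.+1)].
  by rewrite -hcycle_mod map_f // mem_iota add0n ltn_pmod ?cyc_len_gt0.
have hi : hcycle_pos m c (hcycle m.+1 c s) < cyc_len m.+1.
  by rewrite /hcycle_pos -index_mem size_map size_iota in hin.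
split => //; have := nth_index (hcycle m.+1 c 0) hin.
by rewrite (nth_map 0) ?size_iota // nth_iota.
Qed.

Lemma hcycle_pos_hcycle m c s : hcycle_pos m c (hcycle m.+1 c s) = s %% cyc_len m.+1.
Proof.
have [h1 h2] := hcycle_posP c (size_hcycle m.+1 c s).
by rewrite -(hcycle_inj h2) modn_small.
Qed.

Definition hcycle_next m c x := hcycle m.+1 c (hcycle_pos m c x).+1.

Lemma hcycle_next_hcycle m c s : hcycle_next m c (hcycle m.+1 c s) = hcycle m.+1 c s.+1.
Proof. by rewrite /hcycle_next hcycle_pos_hcycle; apply: hcycle_eqmod; rewrite -modnS_mod. Qed.

Lemma hcycle_next_inj m c a b : size a = 2 ^ m.+2 -> size b = 2 ^ m.+2 ->
  hcycle_next m c a = hcycle_next m c b -> a = b.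
Proof.
move=> ha hb /hcycle_inj e.
have [pa ea] := hcycle_posP c ha; have [pb eb] := hcycle_posP c hb.
have e' : hcycle_pos m c a = hcycle_pos m c b %[mod cyc_len m.+1].
  by apply/eqP; rewrite -(eqn_modDr 1) !addn1; apply/eqP.
by rewrite -ea -eb; move: e'; rewrite !modn_small // => ->.
Qed.

Fixpoint walk m (x : seq bool) j :=
  match j with 0 => x | j'.+1 => hcycle_next m (nth 0 (path_cycles m) j') (walk m x j') end.

Lemma size_walk m x j : size x = 2 ^ m.+2 -> size (walk m x j) = 2 ^ m.+2.
Proof. by case: j => //= j; rewrite size_hcycle. Qed.

Lemma walk_step m x j : size x = 2 ^ m.+2 ->
  let c := nth 0 (path_cycles m) j in let s := hcycle_pos m c (walk m x j) in
  walk m x j = hcycle m.+1 c s /\ walk m x j.+1 = hcycle m.+1 c s.+1.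
Proof. by move=> hx c; have [_ h] := hcycle_posP c (size_walk j hx). Qed.

Lemma potential_walk m x j : 2 <= m -> size x = 2 ^ m.+2 -> j <= 7 ->
  potential m (walk m x j) = potential m x + inc_sum j %[mod 8].
Proof.
move=> hm hx; elim: j => [|j IH] hj; first by rewrite addn0.
have [e1 e2] := walk_step j hx; rewrite e2 potential_succ ?path_cycles_lt //.
by rewrite -modnDml -e1 IH ?(ltnW hj) // modnDml pot_inc_path_cycles // inc_sumS // addnA.
Qed.

Lemma walk_inj_step m x i j : 2 <= m -> size x = 2 ^ m.+2 -> i <= 7 -> j <= 7 ->
  walk m x i = walk m x j -> i = j.
Proof.
move=> hm hx hi hj e; apply: inc_sum_inj => //.
by apply/eqP; rewrite -(eqn_modDl (potential m x)) -!potential_walk // e.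
Qed.

Lemma walk_inj m x y j : size x = 2 ^ m.+2 -> size y = 2 ^ m.+2 ->
  walk m x j = walk m y j -> x = y.
Proof.
move=> hx hy; elim: j => [|j IH] //= e.
by apply: IH; apply: hcycle_next_inj e; apply: size_walk.
Qed.

Lemma walk_surj m y j : size y = 2 ^ m.+2 -> exists2 x, size x = 2 ^ m.+2 & walk m x j = y.
Proof.
elim: j y => [|j IH] y hy; first by exists y.
set c := nth 0 (path_cycles m) j.
have [t ->] := hcycle_surj c hy.
have [x hx ex] := IH (hcycle m.+1 c (t + (cyc_len m.+1).-1)) (size_hcycle _ _ _).
exists x => //=; rewrite ex hcycle_next_hcycle; apply: hcycle_eqmod.
by case: (cyc_len m.+1) (cyc_len_gt0 m.+1) => [|N] // _; rewrite -addnS modnDr.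
Qed.

Definition dvop_path m (v : hvert (2 ^ m.+2)) j : hvert (2 ^ m.+2) :=
  vert_of_seq (2 ^ m.+2) (walk m (seq_of_vert v) j).
Arguments dvop_path : clear implicits.

Lemma pedge_dvop_path m (v : hvert (2 ^ m.+2)) l (c := nth 0 (path_cycles m) l) :
  pedge (dvop_path m v) l.+1 = hedge m c (hcycle_pos m c (walk m (seq_of_vert v) l)).
Proof.
have [e1 e2] := walk_step l (size_seq_of_vert v).
by rewrite /pedge /hedge /hvertex /dvop_path -[l.+1.-1]/l -e1 -e2.
Qed.

Lemma dvop_path_embedding m k v : 2 <= m -> k <= 7 -> path_embedding k (dvop_path m v).
Proof.
move=> hm hk; split.
  move=> i j hi hj /vert_of_seq_inj e.
  apply: (walk_inj_step hm (size_seq_of_vert v)); try lia.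
  exact: e (size_walk _ (size_seq_of_vert v)) (size_walk _ (size_seq_of_vert v)).
case=> [|l] //= _; have [e1 e2] := walk_step l (size_seq_of_vert v).
by rewrite /dvop_path e1 e2 hadj_vert_of_seq ?size_hcycle ?hcycle_adj.
Qed.

Lemma dvop_path_pedge_inj m k v v' j j' : 2 <= m -> k <= 7 ->
  1 <= j <= k -> 1 <= j' <= k -> pedge (dvop_path m v) j = pedge (dvop_path m v') j' ->
  v = v' /\ j = j'.
Proof.
move=> hm hk; case: j => [|l] //= hl; case: j' => [|l'] //= hl'.
rewrite !pedge_dvop_path => E.
have ll' : l = l'.
  apply/eqP; rewrite -(nth_uniq 0 _ _ (uniq_path_cycles hm)) /= ?(leq_trans hl, leq_trans hl') //.
  by apply/eqP; apply: hedge_inj_cycle E; apply: path_cycles_lt; lia.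
subst l'; split => //; move/hedge_inj_pos: E.
have [<- _] := walk_step l (size_seq_of_vert v); have [<- _] := walk_step l (size_seq_of_vert v').
move=> /walk_inj-/(_ (size_seq_of_vert v) (size_seq_of_vert v')) e.
by rewrite -(seq_of_vertK v) -(seq_of_vertK v') e.
Qed.

Lemma DVOP_dvop_path m k : 2 <= m -> k <= 7 -> DVOP k (dvop_path m).
Proof.
move=> hm hk; split => [v|v v' j j'|v]; first exact: dvop_path_embedding.
  exact: dvop_path_pedge_inj.
by rewrite /dvop_path /= seq_of_vertK.
Qed.

Lemma dvop_edges_path_cycles m k :
  dvop_edges k (dvop_path m) = \bigcup_(l < k) cycle_edges (ham m (nth 0 (path_cycles m) l)).
Proof.
apply/setP => E; apply/imsetP/bigcupP.
  case=> -[v [[|l] hl]]; rewrite inE //= => _ ->.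
  exists (Ordinal (hl : l < k)) => //; apply/mem_ham_edges; eexists.
  exact: pedge_dvop_path.
case=> l _ /mem_ham_edges [s ->]; set c := nth 0 (path_cycles m) l.
have [x hx ex] := walk_surj l (size_hcycle m.+1 c s).
exists (vert_of_seq (2 ^ m.+2) x, lift ord0 l); rewrite ?inE //= pedge_dvop_path.
rewrite vert_of_seqK // ex hcycle_pos_hcycle /hedge; congr edge_of.
  by apply: hvertex_eqmod; rewrite modn_mod.
by apply: hvertex_eqmod; rewrite -modnS_mod.
Qed.

Lemma bigcup_perm_iota (T : finType) (F : nat -> {set T}) n s t :
  perm_eq (s ++ t) (iota 0 n) ->
  \bigcup_(i < size s) F (nth 0 s i) :|: \bigcup_(j < size t) F (nth 0 t j) =
  \bigcup_(c < n) F c.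
Proof.
move=> hp; rewrite -(big_mkord xpredT (fun i => F (nth 0 s i))).
rewrite -(big_mkord xpredT (fun i => F (nth 0 t i))) -(big_mkord xpredT F).
by rewrite -!(big_nth 0 xpredT F) -big_cat (perm_big _ hp) /index_iota subn0.
Qed.

Definition ham_indices m k := [seq c <- iota 0 (2 ^ m.+1) | c \notin take k (path_cycles m)].

Lemma perm_ham_indices m k : 2 <= m ->
  perm_eq (ham_indices m k ++ take k (path_cycles m)) (iota 0 (2 ^ m.+1)).
Proof.
move=> hm; rewrite perm_sym -(perm_filterC (mem (take k (path_cycles m)))) perm_catC.
apply/perm_cat => //; apply: uniq_perm; rewrite ?filter_uniq ?iota_uniq //.
  exact/take_uniq/uniq_path_cycles.
move=> c; rewrite mem_filter mem_iota add0n andb_idr //.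
move=> /mem_take/(nthP 0) [l hl <-]; exact: path_cycles_lt.
Qed.

Lemma size_ham_indices m k : 2 <= m -> k <= 7 -> size (ham_indices m k) = 2 ^ m.+1 - k.
Proof.
move=> hm hk; have := perm_size (perm_ham_indices k hm).
by rewrite size_cat size_takel // size_iota => <-; rewrite addnK.
Qed.

Lemma ham_indicesP m k i : k <= 7 -> i < size (ham_indices m k) ->
  nth 0 (ham_indices m k) i < 2 ^ m.+1 /\
  forall l, l < k -> nth 0 (ham_indices m k) i != nth 0 (path_cycles m) l.
Proof.
move=> hk /(mem_nth 0); rewrite mem_filter mem_iota add0n => /andP [hc hlt].
split => // l hl; apply: contraNneq hc => ->.
by rewrite -(nth_take 0 hl) mem_nth // size_takel.
Qed.

Theorem proposition8 (r k : nat) :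
  4 <= r -> k <= 7 ->
  exists (H : 'I_(2 ^ r.-1 - k) -> seq (hvert (2 ^ r)))
         (p : hvert (2 ^ r) -> nat -> hvert (2 ^ r)),
    [/\ (forall i, ham_cycle (H i)),
        DVOP k p,
        (forall i j, i != j -> [disjoint cycle_edges (H i) & cycle_edges (H j)]),
        (forall i, [disjoint cycle_edges (H i) & dvop_edges k p])
      & (\bigcup_i cycle_edges (H i)) :|: dvop_edges k p = hedges (2 ^ r)].
Proof.
case: r => [|[|m]] //= hr hk; have hm : 2 <= m by lia.
have hs := size_ham_indices hm hk; rewrite -hs.
exists (fun i => ham m (nth 0 (ham_indices m k) i)), (dvop_path m); split.
- by move=> i; apply: ham_cycle_ham.
- exact: DVOP_dvop_path.
- move=> i j hij; have [hi _] := ham_indicesP hk (ltn_ord i).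
  have [hj _] := ham_indicesP hk (ltn_ord j).
  apply: ham_edges_disjoint hi hj _.
  by rewrite nth_uniq ?filter_uniq ?iota_uniq.
- move=> i; have [hi hic] := ham_indicesP hk (ltn_ord i).
  rewrite dvop_edges_path_cycles; apply: bigcup_disjoint => l _.
  exact: ham_edges_disjoint hi (path_cycles_lt hm (leq_trans (ltn_ord l) _)) (hic _ _).
rewrite dvop_edges_path_cycles hedges_ham.
rewrite -(bigcup_perm_iota (fun c => cycle_edges (ham m c)) (perm_ham_indices k hm)).
by rewrite size_takel //; congr (_ :|: _); apply: eq_bigr => l _; rewrite nth_take.
Qed.
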